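(* Let $\mathcal{G}$ be a MAG and let $H_1,H_2,H$ be heads with maximal vertex $i$ such that $H_1\to^KH$ and $H_2\to^LH$ for some $K,L$. Then $H_3=\mathrm{barren}(H_1\cup H_2)$ is a head and $H_3\to^{K'}H$ for $K'=H_3\setminus H$.
   Context: A MAG is an acyclic directed mixed graph (directed and bidirected edges, no directed cycles) with $\mathrm{sib}(v)\cap\mathrm{an}(v)=\emptyset$ for all $v$ and in which every nonadjacent pair is m-separated by some set. Vertices are numbered topologically. $\mathrm{barren}_{\mathcal{G}'}(W)=\{w\in W:\mathrm{de}_{\mathcal{G}'}(w)\cap W=\{w\}\}$ (with $\mathrm{barren}=\mathrm{barren}_{\mathcal{G}}$); a nonempty $H$ is a head if $\mathrm{barren}(H)=H$ and $H$ lies in one district (bidirected-connected component) of $\mathcal{G}_{\mathrm{an}(H)}$. For a head $H$ with maximal vertex $i$ and $\emptyset\ne K\subseteq H\setminus\{i\}$, $H\to^KH'$ means $H'=\mathrm{barren}_{\mathcal{G}'}(\mathrm{dis}_{\mathcal{G}'}(i))$ where $\mathcal{G}'=\mathcal{G}_{\mathrm{an}(H)\setminus K}$. *)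

(* Mixed graphs on the vertex type 'I_n:
   d u v  <-> u -> v (directed edge),  b u v <-> u <-> v (bidirected edge). *)
From mathcomp Require Import all_boot.
Set Implicit Arguments. Unset Strict Implicit. Unset Printing Implicit Defensive.

Section MixedGraphs.
Variable T : finType.

Definition restr (A : {set T}) (e : rel T) : rel T :=
  fun u v => [&& u \in A, v \in A & e u v].

Definition anc (d : rel T) (W : {set T}) : {set T} :=
  [set u | [exists w in W, connect d u w]].

Definition desc (d : rel T) (w : T) : {set T} := [set x | connect d w x].

Definition barren (d : rel T) (W : {set T}) : {set T} :=
  [set w in W | desc d w :&: W == [set w]].

Definition dis (b : rel T) (A : {set T}) (i : T) : {set T} :=
  [set v | connect (restr A b) i v].

Definition adj (d b : rel T) (x y : T) : bool := [|| d x y, d y x | b x y].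
Definition arrowhead (d b : rel T) (x y : T) : bool := d x y || b x y.
Definition collider (d b : rel T) (x y z : T) : bool :=
  arrowhead d b x y && arrowhead d b z y.

Fixpoint triples_ok (d b : rel T) (Z : {set T}) (x y : T) (s : seq T) : bool :=
  match s with
  | [::] => true
  | z :: s' =>
      (if collider d b x y z then y \in anc d Z else y \notin Z)
      && triples_ok d b Z y z s'
  end.

Definition inner_ok (d b : rel T) (Z : {set T}) (u : T) (p : seq T) : bool :=
  if p is y :: s then triples_ok d b Z u y s else true.

Definition m_connected (d b : rel T) (Z : {set T}) (u v : T) : Prop :=
  exists p : seq T,
    [/\ last u p = v, uniq (u :: p), path (adj d b) u p & inner_ok d b Z u p].

Definition m_separated (d b : rel T) (Z : {set T}) (u v : T) : Prop :=
  [/\ u \notin Z, v \notin Z & ~ m_connected d b Z u v].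

Definition is_head (d b : rel T) (H : {set T}) : Prop :=
  [/\ H != set0, barren d H = H &
      {in H &, forall u v, connect (restr (anc d H) b) u v}].

End MixedGraphs.

(* MAG on 'I_n, with vertices numbered topologically (d u v -> u < v),
   which in particular makes the directed part acyclic. *)
Definition is_MAG (n : nat) (d b : rel 'I_n) : Prop :=
  [/\ (forall u v, d u v -> (u < v)%N),
      irreflexive b, symmetric b,
      (forall u v, b u v -> ~~ connect d u v)   (* sib(v) \cap an(v) = empty *)
    & (forall u v, u != v -> ~~ adj d b u v ->
         exists Z : {set 'I_n}, m_separated d b Z u v)].

Definition max_vertex (n : nat) (H : {set 'I_n}) (i : 'I_n) : Prop :=
  i \in H /\ forall h, h \in H -> (h <= i)%N.

Definition head_arrow (n : nat) (d b : rel 'I_n) (H K H' : {set 'I_n}) : Prop :=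
  exists i, [/\ max_vertex H i, K != set0, K \subset H :\ i &
    H' = barren (restr (anc d H :\: K) d) (dis b (anc d H :\: K) i)].

(* If H1 ->^K H, then
   the district D of i in G_{an(H1) \ K} lies in an(H) (every vertex of D
   reaches a barren vertex of D, i.e. a vertex of H), and an(H) avoids K
   (a vertex of K is barren in H1, so an ancestor of H in K would lie in H).
   Hence D is also the district of i in G_{an(H)}, and H = barren(D).  The
   same holds for H2 ->^L H, so both arrows produce the same district D.
   Passing to H3 = barren(H1 u H2), the district of i in
   G_{an(H3) \ (H3 \ H)} contains D, and cannot leave it: a vertex outside
   an(H1) \ K and an(H2) \ L but inside an(H3) lies in K or L, hence is
   barren in H1 u H2, i.e. lies in H3 \ H, which was removed. *)
From mathcomp Require Import all_boot.
Set Implicit Arguments. Unset Strict Implicit. Unset Printing Implicit Defensive.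

Lemma connect_stable (T : finType) (e : rel T) (S : {pred T}) x y :
  x \in S -> (forall u v, u \in S -> e u v -> v \in S) ->
  connect e x y -> y \in S.
Proof.
move=> Sx Sstep /connectP[p + ->].
by elim: p x Sx => [|z p IH] x Sx //= /andP[/(Sstep _ _ Sx) Sz /(IH _ Sz)].
Qed.

Section MixedGraphSets.
Variable T : finType.
Implicit Types (e d b : rel T) (A B W E : {set T}) (i x y : T).

Lemma connect_restr A e x y : connect (restr A e) x y -> connect e x y.
Proof. by apply: connect_sub => u v /and3P[_ _ /connect1]. Qed.

Lemma connect_restrS A B e x y :
  A \subset B -> connect (restr A e) x y -> connect (restr B e) x y.
Proof.
move=> sAB; apply: connect_sub => u v /and3P[uA vA uv].
by apply: connect1; rewrite /restr (subsetP sAB _ uA) (subsetP sAB _ vA).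
Qed.

Lemma mem_anc d W x : x \in W -> x \in anc d W.
Proof. by move=> xW; rewrite inE; apply/exists_inP; exists x. Qed.

Lemma anc_connect d W x y : connect d x y -> y \in anc d W -> x \in anc d W.
Proof.
move=> xy; rewrite !inE => /exists_inP[w wW yw].
by apply/exists_inP; exists w => //; apply: connect_trans xy yw.
Qed.

Lemma anc_subset d W E : W \subset anc d E -> anc d W \subset anc d E.
Proof.
move=> sWE; apply/subsetP => x; rewrite [x \in anc d W]inE => /exists_inP[w wW].
by move/anc_connect; apply; apply: (subsetP sWE).
Qed.

Lemma subset_anc d W : W \subset anc d W.
Proof. by apply/subsetP => x; apply: mem_anc. Qed.

Lemma ancS d W E : W \subset E -> anc d W \subset anc d E.
Proof. by move=> sWE; apply/anc_subset/(subset_trans sWE)/subset_anc. Qed.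

Lemma ancU d W E : anc d (W :|: E) = anc d W :|: anc d E.
Proof.
apply/setP => x; rewrite !inE; apply/exists_inP/orP.
  by case=> w; rewrite inE => /orP[] wWE xw; [left | right];
    apply/exists_inP; exists w.
by case=> /exists_inP[w wWE xw]; exists w; rewrite // inE wWE ?orbT.
Qed.

Lemma connect_restr_anc d A W x y : anc d W \subset A -> y \in anc d W ->
  connect (restr A d) x y = connect d x y.
Proof.
move=> sWA yW; apply/idP/idP; first exact: connect_restr.
case/connectP=> p; elim: p x => [|z p IH] x /=; first by move=> _ ->.
case/andP=> xz zp y_last; have zy : connect d z y by apply/connectP; exists p.
have zW := anc_connect zy yW; have xW := anc_connect (connect1 xz) zW.
apply: connect_trans (IH _ zp y_last); apply: connect1.
by rewrite /restr (subsetP sWA _ xW) (subsetP sWA _ zW).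
Qed.

Lemma barrenP e W w :
  reflect (w \in W /\ forall y, y \in W -> connect e w y -> y = w)
          (w \in barren e W).
Proof.
rewrite inE; apply: (iffP andP) => -[wW wmin]; split=> //.
  move=> y yW wy; have : y \in desc e w :&: W by rewrite !inE wy.
  by rewrite (eqP wmin) inE => /eqP.
apply/eqP/setP => y; rewrite !inE.
by apply/andP/eqP => [[/wmin] | ->]; [apply | rewrite connect0].
Qed.

Lemma barrenS e W : barren e W \subset W.
Proof. by apply/subsetP => w /barrenP[]. Qed.

Lemma barren_id e W : barren e (barren e W) = barren e W.
Proof.
apply/setP => w; apply/idP/idP; first exact: (subsetP (barrenS _ _)).
move=> wB; apply/barrenP; split=> // y /(subsetP (barrenS _ _)) yW.
by case/barrenP: wB => _; apply.
Qed.

Lemma barren_restr d A W : anc d W \subset A -> barren (restr A d) W = barren d W.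
Proof.
move=> sWA; apply/setP => w; rewrite !inE; congr (_ && (_ == _)).
apply/setP => y; rewrite !inE; case yW: (y \in W); rewrite ?andbF // !andbT.
by rewrite (connect_restr_anc _ sWA (mem_anc d yW)).
Qed.

Lemma mem_barrenU d W E y : barren d W = W -> barren d E = E ->
  (y \in anc d W -> y \in W) -> (y \in anc d E -> y \in E) ->
  y \in anc d (W :|: E) -> y \in barren d (W :|: E).
Proof.
move=> bW bE closedW closedE; rewrite ancU in_setU => yWE.
have yWE' : y \in W :|: E.
  by rewrite in_setU; case/orP: yWE => [/closedW | /closedE] ->; rewrite ?orbT.
apply/barrenP; split=> // z; rewrite inE => /orP[zW | zE] yz.
  have /barrenP[_] : y \in barren d W.
    by rewrite bW closedW ?(anc_connect yz) ?mem_anc.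
  exact.
have /barrenP[_] : y \in barren d E.
  by rewrite bE closedE ?(anc_connect yz) ?mem_anc.
exact.
Qed.

Lemma dis_step b A i x y :
  x \in dis b A i -> restr A b x y -> y \in dis b A i.
Proof. by rewrite !inE => ix /connect1; apply: connect_trans. Qed.

Lemma dis_min b A i (S : {set T}) : i \in S ->
  (forall x y, x \in S -> restr A b x y -> y \in S) -> dis b A i \subset S.
Proof.
by move=> iS Sstep; apply/subsetP => v; rewrite inE; apply: connect_stable.
Qed.

Lemma disS b A B i : A \subset B -> dis b A i \subset dis b B i.
Proof. by move=> sAB; apply/subsetP => v; rewrite !inE; apply: connect_restrS. Qed.

Lemma dis_subset b A i : i \in A -> dis b A i \subset A.
Proof. by move=> iA; apply: dis_min => // x y _ /and3P[]. Qed.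

Lemma dis_restr b A B i :
  B \subset A -> dis b A i \subset B -> dis b B i = dis b A i.
Proof.
move=> sBA sDB; apply/eqP; rewrite eqEsubset disS //=.
apply: dis_min => [|x y xD /[dup] xy /and3P[_ _ bxy]].
  by rewrite inE connect0.
have xDA := subsetP (disS b i sBA) _ xD.
apply: dis_step xD _; rewrite /restr bxy andbT.
by rewrite !(subsetP sDB) // (dis_step xDA xy).
Qed.

End MixedGraphSets.

Section MaxVertex.
Variable n : nat.
Implicit Types (W E : {set 'I_n}) (i j : 'I_n).

Lemma max_vertex_uniq W i j : max_vertex W i -> max_vertex W j -> i = j.
Proof.
move=> [iW imax] [jW jmax]; apply: val_inj; apply/eqP.
by rewrite eqn_leq imax ?jmax.
Qed.

Lemma max_vertexU W E i :
  max_vertex W i -> max_vertex E i -> max_vertex (W :|: E) i.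
Proof.
move=> [iW Wmax] [_ Emax]; split=> [|h]; first by rewrite inE iW.
by rewrite inE => /orP[/Wmax | /Emax].
Qed.

Lemma max_vertexS W E i :
  E \subset W -> i \in E -> max_vertex W i -> max_vertex E i.
Proof. by move=> sEW iE [_ Wmax]; split=> // h /(subsetP sEW) /Wmax. Qed.

End MaxVertex.

Section Topological.
Variables (n : nat) (e : rel 'I_n).
Hypothesis e_lt : forall u v, e u v -> u < v.
Implicit Types (W E : {set 'I_n}) (i u v x : 'I_n).

Lemma connect_leq u v : connect e u v -> u <= v.
Proof.
apply: (@connect_stable _ _ [pred y : 'I_n | u <= y]) => [|x y /= ux /e_lt].
  exact: leqnn.
exact/leq_trans/ltnW.
Qed.

Lemma connect_antisym u v : connect e u v -> connect e v u -> u = v.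
Proof.
move=> uv vu; apply: val_inj; apply/eqP.
by rewrite eqn_leq !connect_leq.
Qed.

Lemma barren_above W x : x \in W -> exists2 w, w \in barren e W & connect e x w.
Proof.
move=> xW; pose P := [pred y : 'I_n | (y \in W) && connect e x y].
have Px : P x by rewrite /P /= xW connect0.
have [w /andP[wW xw] wmax] := @arg_maxnP _ x P (@nat_of_ord n) Px.
exists w => //; apply/barrenP; split=> // y yW wy.
have /wmax yw : P y by rewrite /P /= yW (connect_trans xw wy).
by apply: val_inj; apply/eqP; rewrite eqn_leq (connect_leq wy) andbT.
Qed.

Lemma anc_barren W : anc e (barren e W) = anc e W.
Proof.
apply/eqP; rewrite eqEsubset ancS ?barrenS //=.
apply/subsetP => x; rewrite inE => /exists_inP[w /barren_above[z zB wz] xw].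
exact: anc_connect (connect_trans xw wz) (mem_anc e zB).
Qed.

Lemma barren_anc W E x :
  x \in barren e W -> x \in anc e E -> E \subset anc e W -> x \in E.
Proof.
move=> /barrenP[_ xmin]; rewrite inE => /exists_inP[h hE xh] /subsetP sEW.
have := sEW h hE; rewrite inE => /exists_inP[y yW hy].
have yx := xmin y yW (connect_trans xh hy); subst y.
by rewrite (connect_antisym xh hy).
Qed.

Lemma max_vertex_barren W i : max_vertex W i -> i \in barren e W.
Proof.
move=> [iW imax]; apply/barrenP; split=> // y yW iy.
by apply: val_inj; apply/eqP; rewrite eqn_leq imax ?connect_leq.
Qed.

End Topological.

Lemma is_head_barrenU n (d b : rel 'I_n) H1 H2 i :
  (forall u v, d u v -> u < v) -> is_head d b H1 -> is_head d b H2 ->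
  max_vertex H1 i -> max_vertex H2 i -> is_head d b (barren d (H1 :|: H2)).
Proof.
move=> d_lt [_ _ H1_dis] [_ _ H2_dis] mH1 mH2.
set H3 := barren d (H1 :|: H2).
have iH3 : i \in H3 := max_vertex_barren d_lt (max_vertexU mH1 mH2).
have ancH3 : anc d H3 = anc d H1 :|: anc d H2 by rewrite anc_barren // ancU.
have linked u : u \in H3 ->
    connect (restr (anc d H3) b) u i /\ connect (restr (anc d H3) b) i u.
  move=> /(subsetP (barrenS _ _)); rewrite inE ancH3 => /orP[uH | uH].
    by split; apply: connect_restrS (subsetUl _ _) _; apply: H1_dis; case: mH1.
  by split; apply: connect_restrS (subsetUr _ _) _; apply: H2_dis; case: mH2.
split; [by apply/set0Pn; exists i | exact: barren_id |].
by move=> u v /linked[ui _] /linked[_ iv]; apply: connect_trans ui iv.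
Qed.

Section HeadArrow.
Variables (n : nat) (d b : rel 'I_n) (H1 K H : {set 'I_n}) (i : 'I_n).
Hypotheses (d_lt : forall u v, d u v -> u < v) (H1_barren : barren d H1 = H1).
Hypotheses (iH1 : i \in H1) (sKH1 : K \subset H1 :\ i).
Local Notation A := (anc d H1 :\: K).
Hypothesis H_def : H = barren (restr A d) (dis b A i).

Lemma head_arrow_dis_anc : dis b A i \subset anc d H.
Proof.
have A_lt u v : restr A d u v -> u < v by case/and3P=> _ _ /d_lt.
apply/subsetP => v vD; have [w wH vw] := barren_above A_lt vD.
by rewrite -H_def in wH; apply: anc_connect (connect_restr vw) (mem_anc d wH).
Qed.

Lemma head_arrow_anc : anc d H \subset A.
Proof.
have iA : i \in A.
  rewrite in_setD mem_anc // andbT; apply: contraL iH1 => /(subsetP sKH1).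
  by rewrite !inE eqxx.
have sHA : H \subset A by rewrite H_def (subset_trans (barrenS _ _)) ?dis_subset.
have sH_ancH1 : H \subset anc d H1 := subset_trans sHA (subsetDl _ _).
apply/subsetP => x xH; rewrite inE (subsetP (anc_subset sH_ancH1) _ xH) andbT.
apply/negP => xK.
have xB : x \in barren d H1.
  by rewrite H1_barren; move/(subsetP sKH1): xK; rewrite inE => /andP[].
by have := subsetP sHA x (barren_anc d_lt xB xH sH_ancH1); rewrite inE xK.
Qed.

Lemma head_arrow_dis : dis b (anc d H) i = dis b A i.
Proof. exact: dis_restr head_arrow_anc head_arrow_dis_anc. Qed.

Lemma head_arrow_dis_subset : dis b (anc d H) i \subset anc d H.
Proof. by rewrite head_arrow_dis head_arrow_dis_anc. Qed.

Lemma head_arrow_target : H = barren d (dis b (anc d H) i).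
Proof.
rewrite head_arrow_dis {1}H_def barren_restr //.
exact: subset_trans (anc_subset head_arrow_dis_anc) head_arrow_anc.
Qed.

End HeadArrow.

Section ArrowUnion.
Variables (n : nat) (d b : rel 'I_n) (H1 H2 K L H : {set 'I_n}) (i : 'I_n).
Hypotheses (d_lt : forall u v, d u v -> u < v).
Hypotheses (H1_barren : barren d H1 = H1) (H2_barren : barren d H2 = H2).
Hypotheses (iH1 : i \in H1) (iH2 : i \in H2).
Hypotheses (sKH1 : K \subset H1 :\ i) (sLH2 : L \subset H2 :\ i).
Local Notation A1 := (anc d H1 :\: K).
Local Notation A2 := (anc d H2 :\: L).
Hypothesis H_def1 : H = barren (restr A1 d) (dis b A1 i).
Hypothesis H_def2 : H = barren (restr A2 d) (dis b A2 i).
Local Notation H3 := (barren d (H1 :|: H2)).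
Local Notation A3 := (anc d H3 :\: (H3 :\: H)).

Let ancH_A1 : anc d H \subset A1 := head_arrow_anc d_lt H1_barren iH1 sKH1 H_def1.
Let ancH_A2 : anc d H \subset A2 := head_arrow_anc d_lt H2_barren iH2 sLH2 H_def2.
Let sH_A1 : H \subset A1 := subset_trans (subset_anc d H) ancH_A1.
Let sD_ancH : dis b (anc d H) i \subset anc d H :=
  head_arrow_dis_subset d_lt H1_barren iH1 sKH1 H_def1.

Lemma head_arrowU_anc : anc d H \subset A3.
Proof.
have ancH_H1 : anc d H \subset anc d H1 := subset_trans ancH_A1 (subsetDl _ _).
have sH_H12 : H \subset anc d (H1 :|: H2).
  rewrite ancU (subset_trans (subset_anc d H)) //.
  by rewrite (subset_trans ancH_H1) ?subsetUl.
apply/subsetP => x xH.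
rewrite in_setD anc_barren // (subsetP (anc_subset sH_H12) _ xH) andbT.
by apply/negP => /setDP[xH3]; rewrite (barren_anc d_lt xH3 xH sH_H12).
Qed.

Lemma head_arrowU_neq0 : K != set0 -> H3 :\: H != set0.
Proof.
case/set0Pn=> k kK.
have kH12 : k \in H1 :|: H2.
  by move/(subsetP sKH1): kK; rewrite !inE => /andP[_ ->].
have [z zH3 kz] := barren_above d_lt kH12.
apply/set0Pn; exists z; rewrite inE zH3 andbT; apply: contraL kK => zH.
by have /setDP[] := subsetP ancH_A1 k (anc_connect kz (mem_anc d zH)).
Qed.

Lemma head_arrowU_dis : dis b A3 i = dis b (anc d H) i.
Proof.
set D := dis b (anc d H) i.
have D1 : D = dis b A1 i := head_arrow_dis d_lt H1_barren iH1 sKH1 H_def1.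
have D2 : D = dis b A2 i := head_arrow_dis d_lt H2_barren iH2 sLH2 H_def2.
apply/eqP; rewrite eqEsubset andbC disS ?head_arrowU_anc //=.
apply: dis_min => [|x y xD /and3P[_ yA3 bxy]]; first by rewrite inE connect0.
have xA1 := subsetP (subset_trans sD_ancH ancH_A1) x xD.
have xA2 := subsetP (subset_trans sD_ancH ancH_A2) x xD.
case yA1: (y \in A1).
  by rewrite D1 in xD *; apply: dis_step xD _; rewrite /restr xA1 yA1.
case yA2: (y \in A2).
  by rewrite D2 in xD *; apply: dis_step xD _; rewrite /restr xA2 yA2.
have yH3 : y \in H3.
  move: yA3; rewrite in_setD anc_barren // => /andP[_].
  apply: mem_barrenU => // yanc.
    by move: yA1; rewrite in_setD yanc andbT => /negbFE/(subsetP sKH1)/setD1P[].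
  by move: yA2; rewrite in_setD yanc andbT => /negbFE/(subsetP sLH2)/setD1P[].
have yNH : y \notin H by apply: contraFN yA1 => /(subsetP sH_A1).
by move: yA3; rewrite in_setD in_setD yH3 yNH.
Qed.

Lemma head_arrowU_target : H = barren (restr A3 d) (dis b A3 i).
Proof.
rewrite head_arrowU_dis barren_restr.
  exact: head_arrow_target d_lt H1_barren iH1 sKH1 H_def1.
exact: subset_trans (anc_subset sD_ancH) head_arrowU_anc.
Qed.

End ArrowUnion.

Theorem propositionC6 (n : nat) (d b : rel 'I_n)
  (H1 H2 H : {set 'I_n}) (i : 'I_n) (K L : {set 'I_n}) :
  is_MAG d b ->
  is_head d b H1 -> is_head d b H2 -> is_head d b H ->
  max_vertex H1 i -> max_vertex H2 i -> max_vertex H i ->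
  head_arrow d b H1 K H -> head_arrow d b H2 L H ->
  let H3 := barren d (H1 :|: H2) in
  is_head d b H3 /\ head_arrow d b H3 (H3 :\: H) H.
Proof.
move=> [d_lt _ _ _ _] head1 head2 _ m1 m2 [iH _].
move=> [i1 [m1' K0 sKH1 H_def1]] [i2 [m2' _ sLH2 H_def2]] /=.
rewrite (max_vertex_uniq m1' m1) in sKH1 H_def1.
rewrite (max_vertex_uniq m2' m2) in sLH2 H_def2.
have [[_ H1_barren _] [_ H2_barren _]] := (head1, head2).
have [[iH1 _] [iH2 _]] := (m1, m2).
split; first exact: is_head_barrenU head1 head2 m1 m2.
exists i; split.
- have m12 := max_vertexU m1 m2.
  exact: max_vertexS (barrenS _ _) (max_vertex_barren d_lt m12) m12.
- exact: head_arrowU_neq0 d_lt H1_barren iH1 sKH1 H_def1 K0.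
- by apply: setDS; rewrite sub1set.
- exact: head_arrowU_target d_lt H1_barren H2_barren iH1 iH2 sKH1 sLH2
    H_def1 H_def2.
Qed.
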